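(* Let $\Pi$ be a program (possibly containing default negation $\neg$ and arbitrarily nested explicit negation $\sim$) and let $T$ be a consistent set of explicit literals. Then $T$ is an answer set of $\Pi$ if and only if $\langle T,T\rangle$ is an equilibrium model of $\Pi$ (viewing $\Pi$ as a theory of the logic ${\cal X}_5$).
   Context: Fix a set $\mathit{At}$ of atoms. An explicit literal is an atom $p$ or its explicit negation $\sim p$; a set of explicit literals is consistent if it does not contain both $p$ and $\sim p$ for any $p$. Nested expressions: $F ::= \top \mid \bot \mid p \mid F\vee F \mid F\wedge F \mid \neg F \mid \sim F$ ($p\in\mathit{At}$). A rule is $F\to G$ with $F,G$ nested expressions; a program is a set of rules; a program is explicit if it contains no $\neg$. Classical satisfaction/falsification of a nested expression by a consistent set $T$ of explicit literals: $T\models\top$, $T\not\models\bot$, $T\models p$ iff $p\in T$, $T\models\varphi\wedge\psi$ iff both, $T\models\varphi\vee\psi$ iff at least one, $T\models\sim\varphi$ iff $T=\!\!|\;\varphi$, $T\models\neg\varphi$ iff $T\not\models\varphi$; $T$ does not falsify $\top$, $T=\!\!|\;\bot$, $T=\!\!|\;p$ iff $\sim p\in T$, $T=\!\!|\;\varphi\wedge\psi$ iff $T$ falsifies at least one, $T=\!\!|\;\varphi\vee\psi$ iff $T$ falsifies both, $T=\!\!|\;\sim\varphi$ iff $T\models\varphi$, $T=\!\!|\;\neg\varphi$ iff $T\models\varphi$. $T$ is a model of a program if for every rule $F\to G$, $T\models F$ implies $T\models G$. Reduct of a nested expression w.r.t. $T$: $\top^T=\top$, $\bot^T=\bot$, $p^T=p$,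 $(F\wedge G)^T=F^T\wedge G^T$, $(F\vee G)^T=F^T\vee G^T$, $(\sim F)^T=\sim(F^T)$, $(\neg F)^T=\bot$ if $T\models F$ and $\top$ otherwise. $\Pi^T=\{F^T\to G^T \mid (F\to G)\in\Pi\}$. $T$ is an answer set of $\Pi$ if $T$ is a model of $\Pi^T$ and no consistent set $H\subsetneq T$ is a model of $\Pi^T$. Logic ${\cal X}_5$: formulas $\varphi ::= p\mid\bot\mid\varphi\wedge\varphi\mid\varphi\vee\varphi\mid\varphi\to\varphi\mid\sim\varphi$, with abbreviations $\neg\varphi:=\varphi\to\bot$, $\top:=\neg\bot$ (so nested expressions and rules are formulas, a program is a theory). An ${\cal X}_5$-interpretation is a pair $\langle H,T\rangle$ of consistent sets of explicit literals with $H\subseteq T$. Satisfaction $\models$ and falsification $=\!\!|\;$ are defined jointly: $\langle H,T\rangle\not\models\bot$, $\langle H,T\rangle=\!\!|\;\bot$; $\models p$ iff $p\in H$, $=\!\!|\;p$ iff $\sim p\in H$; $\models\varphi\wedge\psi$ iff both satisfied, $=\!\!|\;\varphi\wedge\psi$ iff at least one falsified; $\models\varphi\vee\psi$ iff at least one satisfied, $=\!\!|\;\varphi\vee\psi$ iff both falsified; $\models\sim\varphi$ iff $=\!\!|\;\varphi$, $=\!\!|\;\sim\varphi$ iff $\models\varphi$; $\langle H,T\rangle\models\varphi\to\psi$ iff (i) $\langle H,T\rangle\not\models\varphi$ or $\langle H,T\rangle\models\psi$, and (ii) $\langle T,T\rangle\not\models\varphi$ or $\langle T,T\rangle\models\psi$;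 $\langle H,T\rangle=\!\!|\;\varphi\to\psi$ iff $\langle T,T\rangle\models\varphi$ and $\langle H,T\rangle=\!\!|\;\psi$. $\langle H,T\rangle$ is a model of a theory $\Gamma$ if it satisfies every formula of $\Gamma$. A total interpretation $\langle T,T\rangle$ is an equilibrium model of $\Gamma$ if it is a model of $\Gamma$ and there is no model $\langle H,T\rangle$ of $\Gamma$ with $H\subsetneq T$. *)

(* Sets of explicit literals are boolean predicates lit -> bool;
   programs (sets of rules, possibly infinite) are predicates rule -> Prop. *)
From Stdlib Require Import Bool.
Set Implicit Arguments.

Section Defs.
Variable At : Type.

Inductive lit : Type := Pos (p : At) | Neg (p : At).

Definition litset := lit -> bool.

Definition consistent (T : litset) : Prop :=
  forall p, ~ (T (Pos p) = true /\ T (Neg p) = true).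

Definition subset (H T : litset) : Prop := forall l, H l = true -> T l = true.
Definition psubset (H T : litset) : Prop :=
  subset H T /\ exists l, T l = true /\ H l = false.

Inductive nexp : Type :=
| NTop | NBot | NAtom (p : At)
| NOr (F G : nexp) | NAnd (F G : nexp)
| NNot (F : nexp)   (* default negation *)
| NSim (F : nexp).  (* explicit negation *)

Record rule : Type := Rule { body : nexp; head : nexp }.
Definition program := rule -> Prop.

Fixpoint csat (T : litset) (F : nexp) {struct F} : bool :=
  match F with
  | NTop => true
  | NBot => false
  | NAtom p => T (Pos p)
  | NAnd F G => csat T F && csat T G
  | NOr F G => csat T F || csat T G
  | NSim F => cfals T F
  | NNot F => negb (csat T F)
  end
with cfals (T : litset) (F : nexp) {struct F} : bool :=
  match F with
  | NTop => false
  | NBot => true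
  | NAtom p => T (Neg p)
  | NAnd F G => cfals T F || cfals T G
  | NOr F G => cfals T F && cfals T G
  | NSim F => csat T F
  | NNot F => csat T F
  end.

Definition cmodel (T : litset) (P : program) : Prop :=
  forall r, P r -> csat T (body r) = true -> csat T (head r) = true.

Fixpoint reduct (T : litset) (F : nexp) : nexp :=
  match F with
  | NTop => NTop
  | NBot => NBot
  | NAtom p => NAtom p
  | NAnd F G => NAnd (reduct T F) (reduct T G)
  | NOr F G => NOr (reduct T F) (reduct T G)
  | NSim F => NSim (reduct T F)
  | NNot F => if csat T F then NBot else NTop
  end.

Definition reduct_rule (T : litset) (r : rule) : rule :=
  Rule (reduct T (body r)) (reduct T (head r)).

Definition reduct_prog (P : program) (T : litset) : program :=
  fun r' => exists r, P r /\ r' = reduct_rule T r.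

Definition answer_set (P : program) (T : litset) : Prop :=
  consistent T /\ cmodel T (reduct_prog P T) /\
  ~ (exists H, consistent H /\ psubset H T /\ cmodel H (reduct_prog P T)).

Inductive form : Type :=
| FAtom (p : At) | FBot
| FAnd (a b : form) | FOr (a b : form) | FImp (a b : form) | FSim (a : form).

Definition FNeg (a : form) : form := FImp a FBot.
Definition FTop : form := FNeg FBot.

Fixpoint xsat (H T : litset) (f : form) {struct f} : bool :=
  match f with
  | FBot => false
  | FAtom p => H (Pos p)
  | FAnd a b => xsat H T a && xsat H T b
  | FOr a b => xsat H T a || xsat H T b
  | FSim a => xfals H T a
  | FImp a b => (negb (xsat H T a) || xsat H T b)
                && (negb (xsat T T a) || xsat T T b)
  end
with xfals (H T : litset) (f : form) {struct f} : bool :=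
  match f with
  | FBot => true
  | FAtom p => H (Neg p)
  | FAnd a b => xfals H T a || xfals H T b
  | FOr a b => xfals H T a && xfals H T b
  | FSim a => xsat H T a
  | FImp a b => xsat T T a && xfals H T b
  end.

Fixpoint nexp2form (F : nexp) : form :=
  match F with
  | NTop => FTop
  | NBot => FBot
  | NAtom p => FAtom p
  | NAnd F G => FAnd (nexp2form F) (nexp2form G)
  | NOr F G => FOr (nexp2form F) (nexp2form G)
  | NSim F => FSim (nexp2form F)
  | NNot F => FNeg (nexp2form F)
  end.

Definition rule2form (r : rule) : form := FImp (nexp2form (body r)) (nexp2form (head r)).

Definition x5_interp (H T : litset) : Prop := consistent H /\ consistent T /\ subset H T.

Definition x5_model (H T : litset) (P : program) : Prop :=
  x5_interp H T /\ forall r, P r -> xsat H T (rule2form r) = true.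

Definition equilibrium_model (P : program) (T : litset) : Prop :=
  x5_model T T P /\ ~ (exists H, psubset H T /\ x5_model H T P).

End Defs.

From Stdlib Require Import Bool Setoid.
Set Implicit Arguments.

(* Truth in the "here" world of an X5-interpretation <H,T> is persistent into
   the "there" world T, and on total interpretations X5 is classical logic.
   Hence default negation [~F] is evaluated at <H,T> exactly as its reduct
   w.r.t. T, so <H,T> satisfies a rule iff H satisfies its reduct and T
   satisfies the rule itself.  Models <H,T> of Pi are therefore the models H
   of Pi^T below a model T of Pi, and minimality of the total model <T,T> is
   minimality of T among the models of Pi^T. *)

Section AnswerSetsAsEquilibria.
Variable At : Type.
Implicit Types (H T : litset At) (F : nexp At) (P : program At).

Lemma subset_refl T : subset T T.
Proof. intros l; trivial. Qed.

Lemma xsat_persistent H T : subset H T -> forall f : form At,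
  (xsat H T f = true -> xsat T T f = true) /\
  (xfals H T f = true -> xfals T T f = true).
Proof.
  intros HT f; induction f; simpl; split; intros X; try apply HT, X;
    rewrite ?andb_true_iff, ?orb_true_iff in *; intuition.
Qed.

Lemma xsat_total_nexp2form T F :
  xsat T T (nexp2form F) = csat T F /\ xfals T T (nexp2form F) = cfals T F.
Proof.
  induction F as [| |p|F1 [S1 F1'] F2 [S2 F2']|F1 [S1 F1'] F2 [S2 F2']|F [S F']|F [S F']];
    simpl; rewrite ?S1, ?F1', ?S2, ?F2', ?S, ?F'; auto.
  destruct (csat T F); auto.
Qed.

Lemma xsat_nexp2form_reduct H T : subset H T -> forall F,
  xsat H T (nexp2form F) = csat H (reduct T F) /\
  xfals H T (nexp2form F) = cfals H (reduct T F).
Proof.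
  intros HT F.
  induction F as [| |p|F1 [S1 F1'] F2 [S2 F2']|F1 [S1 F1'] F2 [S2 F2']|F _|F [S F']];
    simpl; rewrite ?S1, ?F1', ?S2, ?F2', ?S, ?F'; auto.
  destruct (xsat_total_nexp2form T F) as [ST _]; rewrite ST.
  destruct (xsat_persistent HT (nexp2form F)) as [persist _]; rewrite ST in persist.
  destruct (csat T F); simpl; rewrite ?andb_false_r; auto.
  destruct (xsat H T (nexp2form F)); [discriminate (persist eq_refl) | auto].
Qed.

Lemma csat_reduct_self T F : csat T (reduct T F) = csat T F.
Proof.
  rewrite <- (proj1 (xsat_nexp2form_reduct (subset_refl T) F)).
  apply xsat_total_nexp2form.
Qed.

Lemma xsat_rule2form H T (r : rule At) : subset H T ->
  xsat H T (rule2form r) = true <->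
  (csat H (reduct T (body r)) = true -> csat H (reduct T (head r)) = true) /\
  (csat T (body r) = true -> csat T (head r) = true).
Proof.
  intros HT; unfold rule2form; simpl.
  rewrite (proj1 (xsat_nexp2form_reduct HT (body r))),
    (proj1 (xsat_nexp2form_reduct HT (head r))),
    (proj1 (xsat_total_nexp2form T (body r))),
    (proj1 (xsat_total_nexp2form T (head r))).
  destruct (csat H (reduct T (body r))), (csat H (reduct T (head r))),
    (csat T (body r)), (csat T (head r)); simpl; intuition.
Qed.

Lemma cmodel_reduct_progE H T P :
  cmodel H (reduct_prog P T) <-> forall r, P r ->
    csat H (reduct T (body r)) = true -> csat H (reduct T (head r)) = true.
Proof.
  split.
  - intros M r Pr; apply (M (reduct_rule T r)); exists r; auto.
  - intros M r' [r [Pr ->]]; apply M, Pr.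
Qed.

Lemma cmodel_reduct_prog_self T P : cmodel T (reduct_prog P T) <-> cmodel T P.
Proof.
  rewrite cmodel_reduct_progE; unfold cmodel.
  setoid_rewrite csat_reduct_self; tauto.
Qed.

Lemma x5_model_reduct H T P : consistent T -> subset H T ->
  x5_model H T P <-> consistent H /\ cmodel H (reduct_prog P T) /\ cmodel T P.
Proof.
  intros CT HT; unfold x5_model, x5_interp; rewrite cmodel_reduct_progE.
  setoid_rewrite (fun r => xsat_rule2form r HT); unfold cmodel; firstorder.
Qed.

Lemma x5_model_total T P : consistent T ->
  x5_model T T P <-> cmodel T (reduct_prog P T).
Proof.
  intros CT; rewrite x5_model_reduct, cmodel_reduct_prog_self by auto using subset_refl.
  tauto.
Qed.

End AnswerSetsAsEquilibria.

Theorem theorem3 (At : Type) (P : program At) (T : litset At) :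
  consistent T -> (answer_set P T <-> equilibrium_model P T).
Proof.
  intros CT; unfold answer_set, equilibrium_model.
  rewrite x5_model_total by exact CT.
  assert (below_T : forall H, psubset H T -> cmodel T (reduct_prog P T) ->
    x5_model H T P <-> consistent H /\ cmodel H (reduct_prog P T)).
  { intros H [HT _] MT; rewrite cmodel_reduct_prog_self in MT.
    rewrite x5_model_reduct by assumption; tauto. }
  split.
  - intros [_ [MT no_smaller]]; split; [exact MT|].
    intros [H [HT MH]]; apply no_smaller; exists H.
    apply below_T in MH as [CH MH]; auto.
  - intros [MT no_smaller]; split; [exact CT|split; [exact MT|]].
    intros [H [CH [HT MH]]]; apply no_smaller; exists H.
    split; [exact HT|apply below_T; auto].
Qed.
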